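(* Let $p(g)=y^{a(g)}x^{b(g)}$ be a continuous $1$-cocycle of $G_k$ with values in $\pi/[\pi]_2$, so that $b,a:G_k\to\hat{\mathbb Z}(1)$ are cocycles. Then $\delta_2(p)=b\cup a$ in ${\rm H}^2(G_k,\hat{\mathbb Z}(2))$.
   Context: Let $k$ be either a subfield of $\mathbb C$ or the completion of a number field $F\subset\mathbb C$ at a place, with fixed embeddings $\mathbb C\supset\overline{\mathbb Q}\subseteq\overline k$; $G_k=\operatorname{Gal}(\overline k/k)$, $\chi$ the cyclotomic character. $\pi=\pi_1^{et}(\mathbb P^1_{\overline k}-\{0,1,\infty\},\overrightarrow{01})\cong\langle x,y\rangle^\wedge$ (profinite free group; $x$ loop around $0$, $y$ loop around $1$), with $G_k$-action $\sigma(x)=x^{\chi(\sigma)}$, $\sigma(y)=\mathfrak f(\sigma)^{-1}y^{\chi(\sigma)}\mathfrak f(\sigma)$ for a cocycle $\mathfrak f:G_k\to[\pi]_2$. Lower central series $[\pi]_1=\pi$, $[\pi]_{n+1}=\overline{[\pi,[\pi]_n]}$, $[u,v]=uvu^{-1}v^{-1}$. $\pi/[\pi]_2\cong\hat{\mathbb Z}(1)x\oplus\hat{\mathbb Z}(1)y$ and $[\pi]_2/[\pi]_3\cong\hat{\mathbb Z}(2)$ via the basis $[x,y]$, where $\hat{\mathbb Z}(n)$ is $\hat{\mathbb Z}$ with action through $\chi^n$. $\delta_2:{\rm H}^1(G_k,\pi/[\pi]_2)\to{\rm H}^2(G_k,[\pi]_2/[\pi]_3)$ is the connecting map of $1\to[\pi]_2/[\pi]_3\to\pi/[\pi]_3\to\pi/[\pi]_2\to1$.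 Cup product of inhomogeneous cochains: $(b\cup a)(g,h)=b(g)\,\chi(g)a(h)$. *)

From HB Require Import structures.
From mathcomp Require Import all_boot all_order all_algebra.
From mathcomp Require Import boolp classical_sets topology.
Set Implicit Arguments. Unset Strict Implicit. Unset Printing Implicit Defensive.
Import GRing.Theory.
Local Open Scope ring_scope.

(* A commutative ring (with units) carrying a topology: the coefficient ring,
   playing the role of \hat{Z}.  Continuity of the ring operations is imposed
   as hypotheses in the theorem. *)
HB.structure Definition TopComUnitRing :=
  {R of GRing.ComUnitRing R & Topological R}.

Section Defs.
Variables (G : Type) (gmul : G -> G -> G).
Variable (R : comUnitRingType) (chi : G -> R).

(* ---- Twisted modules R(n): R with g acting by multiplication by chi(g)^n. *)

Definition cocycle1 (n : nat) (a : G -> R) : Prop :=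
  forall g h, a (gmul g h) = a g + chi g ^+ n * a h.

Definition cobound1 (n : nat) (c : G -> R) (g h : G) : R :=
  chi g ^+ n * c h - c (gmul g h) + c g.

(* cup product H^1(R(1)) x H^1(R(1)) -> H^2(R(2)) of inhomogeneous cochains,
   with the convention (b \cup a)(g,h) = b(g) chi(g) a(h). *)
Definition cup11 (b a : G -> R) (g h : G) : R := b g * (chi g * a h).

(* ---- The group pi/[pi]_3, modelled as the (completed) free nilpotent group
   of class 2 on x, y: every element is uniquely y^u x^v z^w with
   z = [x,y] = x y x^-1 y^-1 central; we encode it as the triple (u,v,w).
   From x y = z y x one gets the multiplication law below. *)
Definition heis := (R * R * R)%type.
Definition hY (u : heis) : R := u.1.1.
Definition hX (u : heis) : R := u.1.2.
Definition hZ (u : heis) : R := u.2.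
Definition hmk (u v w : R) : heis := (u, v, w).
Definition hmul (p q : heis) : heis :=
  hmk (hY p + hY q) (hX p + hX q) (hZ p + hZ q + hX p * hY q).
Definition hinv (p : heis) : heis :=
  hmk (- hY p) (- hX p) (- hZ p + hX p * hY p).

(* Galois action on pi/[pi]_3 induced by sigma(x) = x^chi(sigma),
   sigma(y) = f(sigma)^-1 y^chi(sigma) f(sigma): since f(sigma) lies in [pi]_2,
   whose image in pi/[pi]_3 is central, sigma acts by
   y^u x^v z^w |-> y^(chi u) x^(chi v) z^(chi^2 w). *)
Definition hact (g : G) (p : heis) : heis :=
  hmk (chi g * hY p) (chi g * hX p) (chi g ^+ 2 * hZ p).

(* ---- The connecting map delta_2 on the class of the cocycle
   p(g) = y^a(g) x^b(g) with values in pi/[pi]_2: lift p(g) to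
   ~p(g) = y^a(g) x^b(g) in pi/[pi]_3 and take the 2-cochain
   (g,h) |-> ~p(g) . g(~p(h)) . ~p(gh)^-1  in [pi]_2/[pi]_3 = R(2) (basis [x,y]). *)
Definition lift_p (a b : G -> R) (g : G) : heis := hmk (a g) (b g) 0.

Definition delta2 (a b : G -> R) (g h : G) : R :=
  hZ (hmul (hmul (lift_p a b g) (hact g (lift_p a b h)))
           (hinv (lift_p a b (gmul g h)))).
End Defs.

Definition cohom2_eq (G : topologicalType) (gmul : G -> G -> G)
  (R : TopComUnitRing.type) (chi : G -> R) (n : nat)
  (u v : G -> G -> R) : Prop :=
  exists c : G -> R, continuous c /\
    forall g h, u g h - v g h = cobound1 gmul chi n c g h.

From HB Require Import structures.
From mathcomp Require Import all_boot all_order all_algebra.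
From mathcomp Require Import boolp classical_sets topology.
Import GRing.Theory.
Local Open Scope ring_scope.

(* In the product p(g) . g(p(h)),
   moving x^b(g) past y^(chi(g) a(h)) produces the [x,y]-exponent
   b(g) chi(g) a(h), and the x-exponent is b(g) + chi(g) b(h) = b(gh) by the
   cocycle relation; so dividing by the lift of p(gh) leaves exactly that
   exponent, and delta_2(p) = b \cup a already as cochains. *)

Section ConnectingMap.
Variables (G : Type) (gmul : G -> G -> G) (R : comUnitRingType) (chi : G -> R).

Lemma hZ_mulV (p q : heis R) :
  hX p = hX q -> hZ (hmul p (hinv q)) = hZ p - hZ q.
Proof.
by rewrite /hmul /hinv /hmk /hZ /hX /hY /= => ->; rewrite mulrN addrA addrK.
Qed.

Lemma delta2_cup11 (a b : G -> R) :
  cocycle1 gmul chi 1 b -> delta2 gmul chi a b =2 cup11 chi b a.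
Proof.
move=> b_cocycle g h; rewrite /delta2 hZ_mulV.
  by rewrite /hmul /hact /lift_p /hmk /hZ /hX /hY /= mulr0 !add0r subr0.
by rewrite /hmul /hact /lift_p /hmk /hZ /hX /hY /= b_cocycle expr1.
Qed.

End ConnectingMap.

Lemma eq_cohom2_eq (G : topologicalType) (gmul : G -> G -> G)
    (R : TopComUnitRing.type) (chi : G -> R) (n : nat) (u v : G -> G -> R) :
  u =2 v -> cohom2_eq gmul chi n u v.
Proof.
move=> eq_uv; exists (fun=> 0); split; first exact: cst_continuous.
by move=> g h; rewrite eq_uv subrr /cobound1 mulr0 subrr addr0.
Qed.

Theorem proposition12p1
  (G : topologicalType) (gmul : G -> G -> G) (gone : G) (ginv : G -> G)
  (gmulA : forall x y z, gmul x (gmul y z) = gmul (gmul x y) z)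
  (gmul1g : forall x, gmul gone x = x)
  (gmulVg : forall x, gmul (ginv x) x = gone)
  (gmul_cont : continuous (fun xy : G * G => gmul xy.1 xy.2))
  (ginv_cont : continuous ginv)
  (R : TopComUnitRing.type)
  (radd_cont : continuous (fun xy : R * R => xy.1 + xy.2))
  (rmul_cont : continuous (fun xy : R * R => xy.1 * xy.2))
  (ropp_cont : continuous (fun x : R => - x))
  (chi : G -> R) (chi_cont : continuous chi)
  (chiM : forall g h, chi (gmul g h) = chi g * chi h)
  (chi_unit : forall g, chi g \is a GRing.unit)
  (a b : G -> R) (a_cont : continuous a) (b_cont : continuous b)
  (a_cocycle : cocycle1 gmul chi 1 a) (b_cocycle : cocycle1 gmul chi 1 b) :
  cohom2_eq gmul chi 2 (delta2 gmul chi a b) (cup11 chi b a).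
Proof. exact/eq_cohom2_eq/delta2_cup11. Qed.
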